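(* Let $X$ and $Y$ be finite $T_0$-spaces. If $X$ is simple homotopy equivalent to $Y$, then $\overline{\mathrm{rank}}(X)=\overline{\mathrm{rank}}(Y)$, where $\overline{\mathrm{rank}}(X):=|X|-\mathrm{rank}(X_M)$.
   Context: A finite $T_0$-space is identified with a finite poset via $x\le y$ iff $U_x\subseteq U_y$, where $U_x$ is the minimal open set containing $x$. For a labelling $X=\{x_1,\dots,x_n\}$, $X_M=(x_{i,j})$ is the $n\times n$ matrix with $x_{i,j}=0$ if $x_i\le x_j$ and $x_{i,j}=1$ otherwise. A point $x$ is a weak beat point if $\{y:y<x\}$ is contractible or $\{y:y>x\}$ is contractible. Two finite $T_0$-spaces are simple homotopy equivalent if one can be obtained from the other (up to homeomorphism) by a finite sequence of adding and removing weak beat points one at a time. *)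

From HB Require Import structures.
From mathcomp Require Import all_boot all_order all_algebra.
From Stdlib Require Import Relation_Operators.
Set Implicit Arguments. Unset Strict Implicit. Unset Printing Implicit Defensive.

(* A finite T0-space, seen as a finite poset: [fle x y] means U_x ⊆ U_y. *)
Record finT0 := FinT0 {
  fcar :> finType;
  fle : rel fcar;
  fle_refl : reflexive fle;
  fle_anti : antisymmetric fle;
  fle_trans : transitive fle }.

Definition flt (X : finT0) (x y : X) := fle x y && (x != y).

(* Subspace of X on the subset A (the induced order = subspace topology). *)
Section Sub.
Variables (X : finT0) (A : {set X}).
Definition sub_car : finType := {x : X | x \in A}.
Definition sub_le : rel sub_car := fun a b => fle (val a) (val b).
Lemma sub_le_refl : reflexive sub_le.
Proof. by move=> a; exact: fle_refl. Qed.
Lemma sub_le_anti : antisymmetric sub_le.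
Proof. by move=> a b H; apply: val_inj; exact: fle_anti. Qed.
Lemma sub_le_trans : transitive sub_le.
Proof. by move=> a b c; exact: fle_trans. Qed.
Definition subspace : finT0 := FinT0 sub_le_refl sub_le_anti sub_le_trans.
End Sub.

(* Continuous maps between finite T0-spaces = order-preserving maps. *)
Definition fmono (X Y : finT0) (f : X -> Y) := forall x y, fle x y -> fle (f x) (f y).

Definition fun_le (X Y : finT0) (f g : X -> Y) := forall x, fle (f x) (g x).

(* Homotopy of maps of finite T0-spaces: a fence of continuous maps
   f = h 0 <= or >= h 1 <= or >= ... h n = g. *)
Definition fhomotopic (X Y : finT0) (f g : X -> Y) :=
  exists (n : nat) (h : nat -> X -> Y),
    h 0 =1 f /\ h n =1 g /\ (forall i, i <= n -> fmono (h i)) /\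
    (forall i, i < n -> fun_le (h i) (h i.+1) \/ fun_le (h i.+1) (h i)).

Definition contractible (X : finT0) :=
  exists x0 : X, fhomotopic (fun x : X => x) (fun _ => x0).

Definition down_strict (X : finT0) (x : X) : finT0 := subspace [set y | flt y x].
Definition up_strict (X : finT0) (x : X) : finT0 := subspace [set y | flt x y].

Definition weak_beat_point (X : finT0) (x : X) :=
  contractible (down_strict x) \/ contractible (up_strict x).

Definition remove_pt (X : finT0) (x : X) : finT0 := subspace [set~ x].

(* Homeomorphism of finite T0-spaces = order isomorphism. *)
Definition homeomorphic (X Y : finT0) :=
  exists f : X -> Y, bijective f /\ forall x y, fle (f x) (f y) = fle x y.

Definition weak_move (X Y : finT0) :=
  (exists x : X, weak_beat_point x /\ homeomorphic (remove_pt x) Y) \/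
  (exists y : Y, weak_beat_point y /\ homeomorphic (remove_pt y) X).

Definition simple_homotopy_equivalent : finT0 -> finT0 -> Prop :=
  clos_refl_trans finT0 (fun X Y => homeomorphic X Y \/ weak_move X Y).

(* X_M for the labelling given by enum X: x_{ij} = 0 if x_i <= x_j, else 1.
   Rank taken over the rationals (= rank over R, as entries are 0/1). *)
Definition XM (X : finT0) : 'M[rat]_#|X| :=
  \matrix_(i, j) (if fle (enum_val i) (enum_val j) then 0 else 1)%R.

Definition rank_bar (X : finT0) : nat := #|X| - \rank (XM X).

(* Let chi(A) = [chain_sum A] be the alternating count of the chains of A,
   the empty chain included: minus the reduced Euler characteristic of the
   order complex of A.  Removing a point x changes chi(X) by chi(U^_x) * chi(F^_x),
   and chi vanishes on contractible spaces (strip beat points until a single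
   point, a cone, is left), so chi is invariant under adding or removing weak
   beat points.  On the other side, X_M = J - Z with J the all-ones matrix and Z
   the invertible zeta matrix; the vector v_x = chi(U^_x) satisfies v Z = 1 and
   v J = (1 - chi(X)) 1, so v X_M = - chi(X) 1.  Hence rank X_M = |X| - 1 if
   chi(X) = 0 and rank X_M = |X| otherwise: rank_bar(X) = [chi(X) = 0]. *)

From mathcomp Require Import all_boot all_order all_algebra.
From mathcomp Require Import lra zify.
Set Implicit Arguments. Unset Strict Implicit. Unset Printing Implicit Defensive.
Import GRing.Theory.
Local Open Scope ring_scope.

Section Order.
Variable X : finT0.
Implicit Types x y z : X.

Lemma flt_trans y x z : flt x y -> flt y z -> flt x z.
Proof.
rewrite /flt => /andP [xy /negP nxy] /andP [yz _]; rewrite (fle_trans xy yz).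
by apply/eqP => exz; apply: nxy; apply/eqP/fle_anti; rewrite xy exz yz.
Qed.

Definition below x := [set y | flt y x].
Definition above x := [set y | flt x y].

Lemma below_irr x : x \notin below x.
Proof. by rewrite inE /flt eqxx andbF. Qed.

Lemma above_irr x : x \notin above x.
Proof. by rewrite inE /flt eqxx andbF. Qed.

Lemma below_proper x y : flt x y -> below x \proper below y.
Proof.
move=> xy; apply/properP; split; last by exists x; rewrite ?below_irr // inE.
by apply/subsetP => z; rewrite !inE => /flt_trans; apply.
Qed.

Lemma exists_minimal (P : pred X) x0 : P x0 ->
  exists2 a, P a & forall z, flt z a -> ~~ P z.
Proof.
move=> Px0; case: (arg_minnP (fun a => #|below a|) Px0) => a Pa amin.
exists a => // z za; apply/negP => /amin; apply/negP.
by rewrite -ltnNge; apply: proper_card; exact: below_proper.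
Qed.

End Order.

Section Opposite.
Variable X : finT0.
Implicit Types x y z : X.

Definition opp_le : rel X := fun a b => fle b a.

Lemma opp_le_refl : reflexive opp_le.
Proof. exact: fle_refl. Qed.

Lemma opp_le_anti : antisymmetric opp_le.
Proof. by move=> a b; rewrite andbC => /fle_anti. Qed.

Lemma opp_le_trans : transitive opp_le.
Proof. by move=> b a c ba cb; exact: fle_trans cb ba. Qed.

Definition opposite : finT0 := FinT0 opp_le_refl opp_le_anti opp_le_trans.

Lemma flt_opposite x y : @flt opposite x y = flt y x.
Proof. by rewrite /flt eq_sym. Qed.

End Opposite.

Lemma exists_maximal (X : finT0) (P : pred X) (x0 : X) : P x0 ->
  exists2 a, P a & forall z, flt a z -> ~~ P z.
Proof.
move=> /(@exists_minimal (opposite X)) [a Pa amax].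
by exists a => // z; rewrite -flt_opposite; exact: amax.
Qed.

Section Chains.
Variable X : finT0.
Implicit Types (A c : {set X}) (x y z : X).

Definition is_chain c := [forall a in c, forall b in c, fle a b || fle b a].

Lemma is_chainP c :
  reflect {in c &, forall a b, fle a b || fle b a} (is_chain c).
Proof.
apply: (iffP forall_inP) => [H a b ac bc | H a ac].
  by have /forall_inP := H a ac; apply.
by apply/forall_inP => b bc; apply: H.
Qed.

Lemma is_chain_subset c c' : c' \subset c -> is_chain c -> is_chain c'.
Proof.
by move=> /subsetP cc' /is_chainP ch; apply/is_chainP => a b /cc' ac /cc' bc; apply: ch.
Qed.

Lemma is_chain_set0 : is_chain set0.
Proof. by apply/is_chainP => a b; rewrite inE. Qed.

Definition chain_sum A : rat :=
  \sum_(c : {set X} | (c \subset A) && is_chain c) (-1) ^+ #|c|.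

Lemma chain_sum_set0 : chain_sum set0 = 1.
Proof.
rewrite /chain_sum (big_pred1 set0) ?cards0 // => c.
by rewrite subset0 andb_idr // => /eqP ->; exact: is_chain_set0.
Qed.

Lemma chain_sum_cone A y :
  y \in A -> {in A, forall z, fle y z || fle z y} -> chain_sum A = 0.
Proof.
move=> yA ycmp.
pose toggle c := if y \in c then c :\ y else y |: c.
have toggleK : involutive toggle.
  move=> c; rewrite {2}/toggle; case: ifP => yc.
    by rewrite /toggle setD11 setD1K.
  by rewrite /toggle setU11 setU1K ?yc.
have toggle_chain c :
    (toggle c \subset A) && is_chain (toggle c) = (c \subset A) && is_chain c.
  wlog yc : c / y \notin c.
    move=> wl; case: (boolP (y \in c)) => [yc|]; last exact: wl.
    have yt : y \notin toggle c by rewrite /toggle yc setD11.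
    by rewrite -[in RHS](toggleK c) (wl _ yt).
  rewrite /toggle (negbTE yc) subUset sub1set yA /=.
  case cA: (c \subset A) => //=; apply/is_chainP/is_chainP => ch a b.
    by move=> ac bc; apply: ch; rewrite inE ?ac ?bc orbT.
  rewrite !inE => /predU1P [-> | ac] /predU1P [-> | bc]; rewrite ?fle_refl //.
  - by apply: ycmp; exact: (subsetP cA).
  - by rewrite orbC; apply: ycmp; exact: (subsetP cA).
  - exact: ch.
have toggle_sign c : (-1) ^+ #|toggle c| = - (-1) ^+ #|c| :> rat.
  rewrite /toggle; case: ifP => yc; last by rewrite cardsU1 yc exprS mulN1r.
  by rewrite -{2}(setD1K yc) cardsU1 setD11 exprS mulN1r opprK.
have : chain_sum A = - chain_sum A.
  rewrite {1}/chain_sum (reindex_inj (can_inj toggleK)) /= -sumrN.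
  by apply: eq_big => c; rewrite ?toggle_chain ?toggle_sign.
lra.
Qed.

End Chains.

Section Embedding.
Variables (X Y : finT0) (f : X -> Y).
Hypothesis fle_f : forall a b, fle (f a) (f b) = fle a b.

Lemma fle_inj : injective f.
Proof.
by move=> a b fab; apply: fle_anti; rewrite -!fle_f fab fle_refl.
Qed.

Lemma is_chain_imset (c : {set X}) : is_chain (f @: c) = is_chain c.
Proof.
apply/is_chainP/is_chainP => ch a b.
  by move=> ac bc; rewrite -!fle_f; apply: ch; exact: imset_f.
by move=> /imsetP [a' ac ->] /imsetP [b' bc ->]; rewrite !fle_f; apply: ch.
Qed.

Lemma chain_sum_imset (A : {set X}) : chain_sum (f @: A) = chain_sum A.
Proof.
have preimK (c : {set X}) : f @^-1: (f @: c) = c.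
  by apply/setP => x; rewrite inE (mem_imset _ _ fle_inj).
rewrite /chain_sum /=.
rewrite (reindex_onto (fun c : {set X} => f @: c) (fun d : {set Y} => f @^-1: d)) /=.
  apply: eq_big => [c|c _]; last by rewrite card_imset //; exact: fle_inj.
  by rewrite preimK eqxx andbT is_chain_imset sub_imset_pre preimK.
move=> d /andP [dA _]; apply/setP => y; apply/imsetP/idP => [[x] | yd].
  by rewrite inE => xd ->.
have /imsetP [x _ yfx] := subsetP dA y yd.
by exists x; rewrite // inE -yfx.
Qed.

End Embedding.

Lemma chain_sum_subspace (X : finT0) (A : {set X}) :
  chain_sum [set: subspace A] = chain_sum A.
Proof.
rewrite -(@chain_sum_imset (subspace A) X val) //; congr chain_sum.
apply/setP => x; apply/imsetP/idP => [[u _ ->] | xA]; first exact: (valP u).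
by exists (Sub x xA : subspace A).
Qed.

Lemma chain_sum_homeomorphic (X Y : finT0) :
  homeomorphic X Y -> chain_sum [set: X] = chain_sum [set: Y].
Proof.
move=> [f [[g _ gK] fle_f]]; rewrite -(chain_sum_imset fle_f); congr chain_sum.
by apply/setP => y; rewrite inE -[y]gK imset_f.
Qed.

Section Link.
Variables (X : finT0) (x : X).
Implicit Types (A c : {set X}).

Lemma below_above_disjoint z : z \in below x -> z \in above x -> False.
Proof.
rewrite !inE /flt => /andP [zx /negP nzx] /andP [xz _].
by apply: nzx; apply/eqP/fle_anti; rewrite zx xz.
Qed.

Section Join.
Variables c1 c2 : {set X}.
Hypotheses (c1_below : c1 \subset below x) (c2_above : c2 \subset above x).

Lemma setI_link_below : (x |: (c1 :|: c2)) :&: below x = c1.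
Proof.
apply/setP => z; rewrite in_setI in_setU1 in_setU.
case: (boolP (z \in c1)) => zc1; first by rewrite orbT (subsetP c1_below).
case: eqP => [-> | _]; first by rewrite (negbTE (below_irr x)) andbF.
by apply/andP => -[zc2 zb]; apply: (below_above_disjoint zb); exact: (subsetP c2_above).
Qed.

Lemma setI_link_above : (x |: (c1 :|: c2)) :&: above x = c2.
Proof.
apply/setP => z; rewrite in_setI in_setU1 in_setU.
case: (boolP (z \in c2)) => zc2; first by rewrite !orbT (subsetP c2_above).
case: eqP => [-> | _]; first by rewrite (negbTE (above_irr x)) andbF.
rewrite orbF; apply/andP => -[zc1 za].
by apply: (below_above_disjoint _ za); exact: (subsetP c1_below).
Qed.

Lemma card_link : #|x |: (c1 :|: c2)| = (#|c1| + #|c2|).+1.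
Proof.
have x_out : x \notin c1 :|: c2.
  rewrite in_setU negb_or; apply/andP; split; apply/negP.
    by move/(subsetP c1_below); rewrite (negbTE (below_irr x)).
  by move/(subsetP c2_above); rewrite (negbTE (above_irr x)).
have c12 : [disjoint c1 & c2].
  apply/pred0P => z /=; apply/negP => /andP [/(subsetP c1_below) zb /(subsetP c2_above)].
  exact: below_above_disjoint.
by rewrite cardsU1 x_out cardsU (disjoint_setI0 c12) cards0 subn0.
Qed.

Lemma is_chain_link : is_chain (x |: (c1 :|: c2)) = is_chain c1 && is_chain c2.
Proof.
have le_x z : z \in c1 -> fle z x.
  by move/(subsetP c1_below); rewrite inE => /andP [].
have ge_x z : z \in c2 -> fle x z.
  by move/(subsetP c2_above); rewrite inE => /andP [].
apply/idP/andP => [ch | [/is_chainP ch1 /is_chainP ch2]].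
  split; apply: is_chain_subset ch; apply: subset_trans (subsetU1 _ _).
    exact: subsetUl.
  exact: subsetUr.
apply/is_chainP => a b; rewrite !inE.
case/predU1P => [-> | /orP [ac | ac]]; case/predU1P => [-> | /orP [bc | bc]].
- by rewrite fle_refl.
- by rewrite le_x ?orbT.
- by rewrite ge_x.
- by rewrite le_x.
- exact: ch1.
- by rewrite (fle_trans (le_x _ ac) (ge_x _ bc)).
- by rewrite ge_x ?orbT.
- by rewrite (fle_trans (le_x _ bc) (ge_x _ ac)) orbT.
- exact: ch2.
Qed.

End Join.

Lemma link_decomp c : is_chain c -> x \in c ->
  x |: ((c :&: below x) :|: (c :&: above x)) = c.
Proof.
move=> /is_chainP ch xc; apply/setP => z; rewrite !inE -andb_orr.
case: eqP => [-> // | /eqP zx /=]; rewrite andb_idr // => zc.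
by rewrite /flt zx eq_sym zx !andbT; apply: ch.
Qed.

Lemma chain_sum_link A : x \in A ->
  chain_sum A =
    chain_sum (A :\ x) - chain_sum (below x :&: A) * chain_sum (above x :&: A).
Proof.
move=> xA; rewrite /chain_sum (bigID (fun c => x \in c)) /= addrC; congr (_ + _).
  by apply: eq_bigl => c; rewrite subsetD1 andbAC.
rewrite big_distrlr pair_big /= -sumrN.
rewrite (reindex_onto (fun p : {set X} * {set X} => x |: (p.1 :|: p.2))
  (fun c => (c :&: below x, c :&: above x))) /=; last first.
  by move=> c /andP [/andP [_ ch] xc]; exact: link_decomp.
apply: eq_big => [[c1 c2] | [c1 c2]] /=; last first.
  case/andP => [_ /eqP [<- <-]].
  by rewrite card_link ?subsetIr // exprS exprD mulN1r.
rewrite !subsetI; set c := x |: _.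
apply/idP/idP => [/andP [/andP [/andP [cA ch] _] /eqP [<- <-]] | ].
  rewrite !subsetIr !(subset_trans (subsetIl _ _) cA).
  by rewrite !(is_chain_subset (subsetIl _ _) ch).
case/and3P => /andP [/andP [c1b c1A] ch1] /andP [c2a c2A] ch2.
by rewrite /c is_chain_link // ch1 ch2 setI_link_below // setI_link_above //
    setU11 !subUset sub1set xA c1A c2A eqxx.
Qed.

End Link.

Lemma chain_sum_by_max (X : finT0) (A : {set X}) :
  chain_sum A = 1 - \sum_(i in A) chain_sum (below i :&: A).
Proof.
have [n] := ubnP #|A|; elim: n A => // n IH A /ltnSE leAn.
have [-> | [x0 x0A]] := set_0Vmem A; first by rewrite chain_sum_set0 big_set0 subr0.
have [x xA xmax] := exists_maximal (P := fun z => z \in A) x0A.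
have above_x : above x :&: A = set0.
  by apply/setP => z; rewrite !inE; case: (boolP (flt x z)) => [/xmax /negbTE ->|].
have below_i i : i \in A -> below i :&: (A :\ x) = below i :&: A.
  move=> iA; apply/setP => z; rewrite !inE andbA andbAC.
  case: eqP => [-> | _]; last by rewrite andbT.
  by rewrite andbF xA andbT; apply/esym/negP => /xmax; rewrite iA.
have cardAx : (#|A :\ x| < n)%N by move: leAn; rewrite (cardsD1 x) xA.
rewrite (chain_sum_link xA) above_x chain_sum_set0 mulr1 (IH _ cardAx).
rewrite (bigD1 x xA) /= opprD addrA [in LHS]addrAC; congr (_ - _).
rewrite [in RHS](eq_bigl (fun i => i \in A :\ x)) => [|i]; last by rewrite in_setD1 andbC.
by apply: eq_bigr => i /setD1P [_ iA]; rewrite below_i.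
Qed.

(* [a] is a beat point of [X] with [b] the maximum of [below a] or the minimum
   of [above a]; the last conjunct says that [a |-> b] is order-preserving. *)
Definition beat_pair (X : finT0) (a b : X) :=
  [&& b != a, fle b a || fle a b &
      [forall z, (z != a) ==> (fle z a ==> fle z b) && (fle a z ==> fle b z)]].

Lemma beat_pair_opposite (X : finT0) (a b : X) :
  @beat_pair (opposite X) a b = beat_pair a b.
Proof.
rewrite /beat_pair /= orbC; congr [&& _, _ & _]; apply: eq_forallb => z.
by rewrite andbC.
Qed.

Lemma le_id_eq_id (X : finT0) (g : X -> X) :
  (forall a b : X, ~~ beat_pair a b) -> fmono g -> (forall x, fle (g x) x) -> g =1 id.
Proof.
move=> nobeat gmono gle x; apply/eqP; apply: contraT => gx.
have [a ga amin] := exists_minimal (P := fun a => g a != a) gx.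
have /negP [] := nobeat a (g a).
apply/and3P; split=> //; first by rewrite gle.
apply/forallP => z; apply/implyP => za; apply/andP; split; apply/implyP => hz.
  have /negPn /eqP <- : ~~ (g z != z) by apply: amin; rewrite /flt hz za.
  exact: gmono.
exact: fle_trans (gle a) hz.
Qed.

Lemma homotopic_id_eq_id (X : finT0) (g : X -> X) :
  (forall a b : X, ~~ beat_pair a b) -> fhomotopic id g -> g =1 id.
Proof.
move=> nobeat [n [h [h0 [hn [hmono hstep]]]]] x; rewrite -hn.
suff hid : forall i, (i <= n)%N -> h i =1 id by exact: hid.
elim=> [|i IH] hi y; first exact: h0.
have hi_id := IH (ltnW hi).
case: (hstep i hi) => hle.
- apply: (@le_id_eq_id (opposite X)) => [a b | a b | z].
  + by rewrite beat_pair_opposite.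
  + exact: hmono.
  + by have := hle z; rewrite hi_id.
- apply: le_id_eq_id => // [a b | z]; first exact: hmono.
  by have := hle z; rewrite hi_id.
Qed.

Lemma contractible_no_beat (X : finT0) :
  contractible X -> (forall a b : X, ~~ beat_pair a b) -> exists x0 : X, forall z, z = x0.
Proof.
by move=> [x0 hom] nobeat; exists x0 => z; rewrite (homotopic_id_eq_id nobeat hom z).
Qed.

Lemma contractible_remove_beat (X : finT0) (a b : X) :
  beat_pair a b -> contractible X -> contractible (remove_pt a).
Proof.
case/and3P => ba _ /forallP b_mono [x0 [n [h [h0 [hn [hmono hstep]]]]]].
have b_in : b \in [set~ a] by rewrite !inE.
pose r (z : X) : remove_pt a := insubd (Sub b b_in) z.
have r_val z : val (r z) = if z == a then b else z.
  by rewrite /r val_insubd !inE; case: (z == a).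
have r_mono z w : fle z w -> fle (r z) (r w).
  rewrite /= /sub_le !r_val.
  case: (eqVneq z a) => [-> | za]; case: (eqVneq w a) => [-> | wa] zw //.
  - exact: fle_refl.
  - by have /implyP /(_ wa) /andP [_ /implyP] := b_mono w; apply.
  - by have /implyP /(_ za) /andP [/implyP + _] := b_mono z; apply.
exists (r x0), n, (fun i u => r (h i (val u))).
split; first by move=> u; rewrite h0 /r valKd.
split; first by move=> u; rewrite hn.
split; first by move=> i hi u v uv; apply: r_mono; exact: hmono.
by move=> i hi; case: (hstep i hi) => hle; [left | right] => u; apply: r_mono.
Qed.

Lemma card_remove_pt (X : finT0) (x : X) : #|remove_pt x|.+1 = #|X|.
Proof.
have -> : #|remove_pt x| = #|[set~ x]|.
  by rewrite card_sig; apply: eq_card => y; rewrite !inE.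
by rewrite cardsC1 prednK //; apply/card_gt0P; exists x.
Qed.

Lemma chain_sum_remove_pt (X : finT0) (x : X) :
  chain_sum [set: X] = chain_sum [set: remove_pt x]
    - chain_sum [set: down_strict x] * chain_sum [set: up_strict x].
Proof. by rewrite !chain_sum_subspace (chain_sum_link (in_setT x)) !setIT setTD. Qed.

Lemma chain_sum_remove_beat (X : finT0) (a b : X) :
  beat_pair a b -> chain_sum [set: X] = chain_sum [set: remove_pt a].
Proof.
case/and3P => ba ab /forallP b_mono.
rewrite (chain_sum_remove_pt a) !chain_sum_subspace.
suff -> : chain_sum (below a) * chain_sum (above a) = 0 by rewrite subr0.
case/orP: ab => [b_le_a | a_le_b].
- suff -> : chain_sum (below a) = 0 by rewrite mul0r.
  apply: (chain_sum_cone (y := b)); first by rewrite inE /flt b_le_a.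
  move=> z; rewrite inE /flt => /andP [za z_ne_a].
  by have /implyP /(_ z_ne_a) /andP [/implyP /(_ za) -> _] := b_mono z; rewrite orbT.
- suff -> : chain_sum (above a) = 0 by rewrite mulr0.
  apply: (chain_sum_cone (y := b)); first by rewrite inE /flt a_le_b eq_sym.
  move=> z; rewrite inE /flt eq_sym => /andP [az z_ne_a].
  by have /implyP /(_ z_ne_a) /andP [_ /implyP /(_ az) ->] := b_mono z.
Qed.

Lemma chain_sum_contractible (X : finT0) : contractible X -> chain_sum [set: X] = 0.
Proof.
have [n] := ubnP #|X|; elim: n X => // n IH X /ltnSE leXn contrX.
case: (pickP (fun p : X * X => beat_pair p.1 p.2)) => [[a b] /= ab | nobeat].
  rewrite (chain_sum_remove_beat ab) IH //; first by rewrite -ltnS card_remove_pt.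
  exact: contractible_remove_beat ab contrX.
have [x0 all_x0] := contractible_no_beat contrX (fun a b => negbT (nobeat (a, b))).
by apply: (chain_sum_cone (in_setT x0)) => z _; rewrite (all_x0 z) fle_refl.
Qed.

Lemma chain_sum_remove_weak_beat (X : finT0) (x : X) :
  weak_beat_point x -> chain_sum [set: X] = chain_sum [set: remove_pt x].
Proof.
rewrite (chain_sum_remove_pt x) => -[] /chain_sum_contractible ->.
  by rewrite mul0r subr0.
by rewrite mulr0 subr0.
Qed.

Lemma chain_sum_simple_homotopy (X Y : finT0) :
  simple_homotopy_equivalent X Y -> chain_sum [set: X] = chain_sum [set: Y].
Proof.
elim=> {X Y} [X Y [XY | [[x [wx xY]] | [y [wy yX]]]] | X | X Y Z _ -> _ ->] //.
- exact: chain_sum_homeomorphic.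
- by rewrite (chain_sum_remove_weak_beat wx); exact: chain_sum_homeomorphic.
- by rewrite (chain_sum_remove_weak_beat wy) (chain_sum_homeomorphic yX).
Qed.

Section Matrices.
Variable X : finT0.

Local Notation n := #|X|.
Local Notation ones := (const_mx 1 : 'M[rat]_n).
Local Notation ones_row := (const_mx 1 : 'rV[rat]_n).

Definition zeta : 'M[rat]_n :=
  \matrix_(i, j) (if fle (enum_val i) (enum_val j) then 1 else 0).

Lemma XM_ones_zeta : XM X = ones - zeta.
Proof. by apply/matrixP => i j; rewrite !mxE; case: fle; rewrite ?subr0 ?subrr. Qed.

Lemma row_free_zeta : row_free zeta.
Proof.
apply: inj_row_free => u uZ; apply/rowP => i; rewrite mxE; apply/eqP/contraT => ui.
have ui' : u 0 (enum_rank (enum_val i)) != 0 by rewrite enum_valK.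
have [x ux xmin] := exists_minimal (P := fun x => u 0 (enum_rank x) != 0) ui'.
have := congr1 (fun v : 'rV_n => v 0 (enum_rank x)) uZ; rewrite !mxE.
rewrite (bigD1 (enum_rank x)) //= mxE enum_rankK fle_refl mulr1 big1 ?addr0.
  by move/eqP: ux.
move=> l lx; rewrite mxE enum_rankK; case: ifP => [l_le_x | _]; last by rewrite mulr0.
suff /negPn /eqP : ~~ (u 0 (enum_rank (enum_val l)) != 0).
  by rewrite enum_valK => ->; rewrite mul0r.
apply: xmin; rewrite /flt l_le_x.
by apply: contra lx => /eqP <-; rewrite enum_valK.
Qed.

(* [mobius_row] is [- mu(0, x)] for the Moebius function of [X] with a bottom
   [0] adjoined (Philip Hall's theorem), whence [mobius_row_zeta]. *)
Definition mobius_row : 'rV[rat]_n := \row_i chain_sum (below (enum_val i)).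

Lemma sum_chain_sum_below_le (x : X) : \sum_(y | fle y x) chain_sum (below y) = 1.
Proof.
have cone0 : chain_sum [set y | fle y x] = 0.
  apply: (chain_sum_cone (y := x)) => [|z]; rewrite inE ?fle_refl //.
  by move=> ->; rewrite orbT.
have := chain_sum_by_max [set y | fle y x].
rewrite cone0 => /eqP; rewrite eq_sym subr_eq0 => /eqP ->.
apply: eq_big => [y | y yx]; first by rewrite inE.
congr chain_sum; apply/setP => z; rewrite !inE andb_idr // => /andP [zy _].
exact: fle_trans zy yx.
Qed.

Lemma sum_chain_sum_below : \sum_(y : X) chain_sum (below y) = 1 - chain_sum [set: X].
Proof.
rewrite chain_sum_by_max opprB addrC subrK.
by apply: eq_big => [y | y _]; rewrite ?inE ?setIT.
Qed.

Lemma mobius_row_zeta : mobius_row *m zeta = ones_row.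
Proof.
apply/rowP => j; rewrite !mxE -(sum_chain_sum_below_le (enum_val j)).
rewrite [RHS]big_mkcond [RHS]big_enum_val.
by apply: eq_bigr => i _; rewrite !mxE; case: ifP; rewrite ?mulr1 ?mulr0.
Qed.

Lemma mobius_row_ones : mobius_row *m ones = (1 - chain_sum [set: X]) *: ones_row.
Proof.
apply/rowP => j; rewrite !mxE mulr1 -sum_chain_sum_below [RHS]big_enum_val.
by apply: eq_bigr => i _; rewrite !mxE mulr1.
Qed.

Lemma mobius_row_XM : mobius_row *m XM X = - chain_sum [set: X] *: ones_row.
Proof.
rewrite XM_ones_zeta mulmxBr mobius_row_ones mobius_row_zeta scalerBl scale1r.
by rewrite addrAC subrr add0r scaleNr.
Qed.

Lemma rank_XM_ge : (n <= (\rank (XM X)).+1)%N.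
Proof.
have rank_ones : (\rank ones <= 1)%N.
  apply: leq_trans (mxrankS _) (rank_leq_row ones_row).
  by apply/row_subP => i; rewrite row_const.
have := mxrank_add ones (- XM X).
have -> : ones + - XM X = zeta by rewrite XM_ones_zeta opprB addrC subrK.
rewrite mxrank_opp (eqP row_free_zeta).
by move/leq_trans; apply; rewrite -add1n leq_add2r.
Qed.

Lemma rank_XM_full : chain_sum [set: X] != 0 -> \rank (XM X) = n.
Proof.
move=> E0.
have ones_row_sub : (ones_row <= XM X)%MS.
  have -> : ones_row = (- chain_sum [set: X])^-1 *: (mobius_row *m XM X).
    by rewrite mobius_row_XM scalerA mulVf ?scale1r // oppr_eq0.
  by rewrite scalemx_sub // submxMl.
have zeta_sub : (zeta <= XM X)%MS.
  have -> : zeta = ones - XM X by rewrite XM_ones_zeta opprB addrC subrK.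
  rewrite addmx_sub ?eqmx_opp //; apply/row_subP => i; rewrite row_const //.
apply/eqP; rewrite eqn_leq rank_leq_row -{1}(eqP row_free_zeta); exact: mxrankS.
Qed.

Lemma rank_XM_deficient : chain_sum [set: X] = 0 -> (\rank (XM X) < n)%N.
Proof.
move=> E0.
have n_gt0 : (0 < n)%N.
  rewrite lt0n; apply/eqP => /eqP; rewrite -cardsT cards_eq0 => /eqP XT.
  by move: E0; rewrite XT chain_sum_set0 => /eqP; rewrite oner_eq0.
have : ~~ row_free (XM X).
  apply/negP => /(mulmx_free_eq0 mobius_row); rewrite mobius_row_XM E0 oppr0 scale0r eqxx.
  move=> /esym /eqP mob0; move: mobius_row_zeta; rewrite mob0 mul0mx.
  by move/rowP/(_ (Ordinal n_gt0))/eqP; rewrite !mxE eq_sym oner_eq0.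
by rewrite ltn_neqAle rank_leq_row andbT.
Qed.

Lemma rank_bar_chain_sum : rank_bar X = (chain_sum [set: X] == 0).
Proof.
rewrite /rank_bar; have := rank_XM_ge; have := rank_leq_row (XM X).
by case: eqP => [/rank_XM_deficient | /eqP /rank_XM_full ->] /=; lia.
Qed.

End Matrices.

Theorem mainTheorem9 (X Y : finT0) :
  simple_homotopy_equivalent X Y -> rank_bar X = rank_bar Y.
Proof. by move=> XY; rewrite !rank_bar_chain_sum (chain_sum_simple_homotopy XY). Qed.
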